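(* Let $G\in L_2(U,\mu)$, $w=\sum_\alpha w_\alpha\mathfrak{N}_\alpha$ with $w_\alpha\in\mathbb{R}$, and $f=\sum_\alpha f_\alpha(t,\upsilon)\mathfrak{N}_\alpha$ with $f_\alpha\in L_2(U,\mu)$ for each $\alpha$. Then the equation $$u(t)=w+\int_0^t\int_V[u(s)G(s,\upsilon)+f(s,\upsilon)]\diamond\mathfrak{N}(ds,d\upsilon),\quad 0\le t\le T,$$ has a unique solution $u(t)=\sum_\alpha u_\alpha(t)\mathfrak{N}_\alpha$ in the class of generalized processes whose coefficients $u_\alpha$ are continuous on $[0,T]$. Its coefficients are $u_0(t)=w_0$ and, for $|\alpha|\ge1$, $$u_\alpha(t)=w_\alpha+\sum_{k:\alpha_k\ge1}\int_0^t\int_V[u_{\alpha-\varepsilon_k}(r)G(r,\upsilon)+f_{\alpha-\varepsilon_k}(r,\upsilon)]m_k(r,\upsilon)\pi(d\upsilon)dr,\quad 0\le t\le T.$$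
   Context: Let $(V,\mathcal{V},\pi)$ be a $\sigma$-finite measure space, $U=[0,T]\times V$, $\mu=dt\otimes\pi$, $\{m_k\}$ a complete orthonormal system of $L_2(U,\mu)$; $\mathfrak{N}:L_2(U,\mu)\to L_2(\Omega,\mathbf{P})$ a mean-zero linear isometry, $\xi_k=\mathfrak{N}(m_k)$. $J$: finitely supported multi-indices of nonnegative integers, $\varepsilon_k$ unit multi-indices; $\{\mathfrak{N}_\alpha\}$ an orthogonal family with $\mathbf{E}\mathfrak{N}_\alpha^2=\alpha!$, $\mathfrak{N}_0=1$, obtained by degreewise orthogonalization of monomials in the $\xi_k$. Generalized random variables/processes are formal series $\sum_\alpha u_\alpha\mathfrak{N}_\alpha$ (with $u_\alpha$ numbers, resp. functions of $t$); equality means equality of all coefficients. For $h=\sum_\alpha h_\alpha(s,\upsilon)\mathfrak{N}_\alpha$ with $h_\alpha\in L_2(U,\mu)$, $\int_0^t\int_Vh\diamond\mathfrak{N}(ds,d\upsilon):=\delta(\chi_{[0,t]}h)=\sum_\alpha\sum_k\left(\int_0^t\int_Vh_\alpha m_k\,d\pi ds\right)\mathfrak{N}_{\alpha+\varepsilon_k}$; and $u(s)G(s,\upsilon):=\sum_\alpha u_\alpha(s)G(s,\upsilon)\mathfrak{N}_\alpha$. *)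

From HB Require Import structures.
From mathcomp Require Import all_boot all_order all_algebra.
From mathcomp Require Import all_classical all_reals all_analysis.
Set Implicit Arguments. Unset Strict Implicit. Unset Printing Implicit Defensive.
Import Order.TTheory GRing.Theory Num.Theory.
Import numFieldNormedType.Exports.
Local Open Scope classical_set_scope.
Local Open Scope ring_scope.

(** * Multi-indices: finitely supported sequences of nonnegative integers.
    A multi-index is a function [nat -> nat]; the set J of the paper is the set
    of those with finite support ([fin_supp]). *)
Definition multi_index := nat -> nat.
Definition fin_supp (a : multi_index) : Prop := finite_set [set k | a k != 0%N].
Definition mi_zero : multi_index := fun _ => 0%N.
Definition eps (k : nat) : multi_index := fun j => nat_of_bool (j == k).
Definition mi_add (a b : multi_index) : multi_index := fun j => (a j + b j)%N.
Definition mi_sub (a b : multi_index) : multi_index := fun j => (a j - b j)%N.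
Definition mi_norm (a : multi_index) : nat :=
  (\sum_(k \in [set k | a k != 0%N]) a k)%N.

Section setting.
Context {R : realType} {d : measure_display} {V : measurableType d}.

Definition mu (pi : {sigma_finite_measure set V -> \bar R}) :=
  ((@lebesgue_measure R) \x pi)%E.

Definition Uset (T : R) : set (R * V) := `[0, T] `*` setT.

Definition L2 (pi : {sigma_finite_measure set V -> \bar R}) (T : R)
    (g : R * V -> R) : Prop :=
  measurable_fun (Uset T) g /\
  (\int[mu pi]_(z in Uset T) ((g z) ^+ 2)%:E < +oo)%E.

Definition ip (pi : {sigma_finite_measure set V -> \bar R}) (T : R)
    (g h : R * V -> R) : R :=
  Rintegral (mu pi) (Uset T) (fun z => g z * h z).

Definition complete_orthonormal (pi : {sigma_finite_measure set V -> \bar R})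
    (T : R) (m : nat -> R * V -> R) : Prop :=
  [/\ (forall k, L2 pi T (m k)),
      (forall j k, ip pi T (m j) (m k) = (j == k)%:R) &
      (forall g, L2 pi T g -> (forall k, ip pi T g (m k) = 0) ->
         {ae mu pi, forall z, Uset T z -> g z = 0})].

(** * Generalized random variables / processes / fields, as formal series
    sum_a x_a N_a, represented by their coefficient families
    (equality = equality of all coefficients a in J). *)
Definition gen_rv := multi_index -> R.
Definition gen_proc := multi_index -> R -> R.
Definition gen_field := multi_index -> R * V -> R.

(** Coefficients of the diamond integral
      int_0^t int_V h <> N(ds,dv) = sum_a sum_k (int_0^t int_V h_a m_k) N_{a+eps_k}.
    The coefficient at b collects the pairs (a,k) with a + eps_k = b, i.e.
    k with b_k >= 1 and a = b - eps_k. *)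
Definition diamond_int (pi : {sigma_finite_measure set V -> \bar R})
    (m : nat -> R * V -> R) (h : gen_field) (t : R) : gen_rv :=
  fun b => \sum_(k \in [set k | (0 < b k)%N])
             Rintegral (mu pi) (`[0, t] `*` setT)
               (fun z => h (mi_sub b (eps k)) z * m k z).

Definition lin_field (u : gen_proc) (G : R * V -> R) (f : gen_field) : gen_field :=
  fun a z => u a z.1 * G z + f a z.

Definition is_solution (pi : {sigma_finite_measure set V -> \bar R}) (T : R)
    (m : nat -> R * V -> R) (w : gen_rv) (G : R * V -> R) (f : gen_field)
    (u : gen_proc) : Prop :=
  forall t, 0 <= t <= T -> forall a, fin_supp a ->
    u a t = w a + diamond_int pi m (lin_field u G f) t a.

Definition continuous_coeffs (T : R) (u : gen_proc) : Prop :=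
  forall a, fin_supp a -> {within `[0, T], continuous (u a)}.

End setting.

From HB Require Import structures.
From mathcomp Require Import all_boot all_order all_algebra.
From mathcomp Require Import all_classical all_reals all_analysis.
From mathcomp Require Import finmap zify lra measurable_realfun.
Set Implicit Arguments. Unset Strict Implicit. Unset Printing Implicit Defensive.
Import Order.TTheory GRing.Theory Num.Theory.
Import numFieldNormedType.Exports.
Local Open Scope classical_set_scope.
Local Open Scope ring_scope.

(* The equation is triangular in the chaos degree: by the definition of the
   diamond integral, coefficient [a] of its right-hand side only involves the
   coefficients [a - eps_k] of degree [|a| - 1].  Hence uniqueness follows by
   induction on [|a|], and iterating the right-hand side from the constant
   process [w] produces a solution, since the [n]-th iterate has already
   stabilised in every coefficient of degree below [n].  Continuity in [t] of
   each coefficient reduces, via Fubini, to the continuity of an indefinite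
   Lebesgue integral [t |-> int_0^t F]; the integrands are integrable because a continuous
   coefficient is bounded on [[0, T]] and [G], [f_a], [m_k] are square
   integrable. *)

Lemma fin_supp_mi_sub (a b : multi_index) : fin_supp a -> fin_supp (mi_sub a b).
Proof. by apply: sub_finite_set => j; rewrite /= /mi_sub; apply: contra_neq => ->. Qed.

Lemma fin_supp_mi_zero : fin_supp mi_zero.
Proof. by rewrite /fin_supp /mi_zero eqxx set_false; exact: finite_set0. Qed.

Lemma mi_norm_sub_eps (a : multi_index) k : fin_supp a -> (0 < a k)%N ->
  mi_norm a = (mi_norm (mi_sub a (eps k))).+1.
Proof.
move=> fa ak; set S := [set j | a j != 0%N].
have Sk : S k by rewrite /S /= -lt0n.
rewrite /mi_norm (fsbig_widen [set j | mi_sub a (eps k) j != 0%N] S); last 2 first.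
- by move=> j /=; apply: contra_neq; rewrite /mi_sub => ->.
- by move=> j [_ /negP]; rewrite negbK => /eqP.
rewrite (fsbigD1 k S a) // (fsbigD1 k S (fun j => mi_sub a (eps k) j)) //.
rewrite [in RHS](eq_fsbigr (fun j => a j)); last first.
  by move=> j; rewrite in_setE => -[_ /= /eqP jk]; rewrite /mi_sub /eps (negPf jk) subn0.
rewrite /mi_sub /eps eqxx /=; move: ak; set X := (\big[_/_]_(x \in _) _); lia.
Qed.

Lemma continuous_fsum (R : realType) (T : topologicalType) (I : choiceType)
    (A : set T) (K : set I) (F : I -> T -> R) :
  finite_set K -> (forall k, K k -> {within A, continuous (F k)}) ->
  {within A, continuous (fun t => \sum_(k \in K) F k t)}.
Proof.
move=> fK cF.
have -> : (fun t => \sum_(k \in K) F k t) =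
    (fun t => \sum_(k <- (fset_set K : seq I) | k \in (fset_set K : seq I)) F k t).
  apply/funext => t; rewrite -big_seq; apply: fsbig_fwiden => //.
  - by move=> x Kx /=; rewrite in_fset_set // in_setE.
  - by move=> x [/=]; rewrite in_fset_set // in_setE.
apply: (@continuous_big R I +%R 0 _ add_continuous (subspace A)) => k.
by rewrite in_fset_set // in_setE; exact: cF.
Qed.

Lemma continuous_segment_bounded (R : realType) (a b : R) (v : R -> R) :
  {within `[a, b], continuous v} ->
  exists2 M, 0 <= M & forall t, t \in `[a, b] -> `|v t| <= M.
Proof.
move=> cv; have [ab|ba] := leP a b; last first.
  by exists 0 => // t; rewrite in_itv /= => /andP[/le_trans/[apply]]; rewrite leNgt ba.
have va : (v @` `[a, b]) (v a) by exists a => //=; rewrite in_itv /= lexx ab.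
have /compact_bounded := continuous_compact cv (@segment_compact R a b).
move=> /(@ex_bound _ _ _ _ _ (globally_properfilter va)) [M vM].
exists `|M| => // t tab; apply: le_trans (vM _ _) (ler_norm _).
by exists t => //; rewrite -in_setE.
Qed.

(* [M |b e| + |c e| <= M (b^2 + e^2) + (c^2 + e^2)], by AM-GM. *)
Lemma normr_affine_mul_le (R : realFieldType) (a b c e M : R) : `|a| <= M ->
  `|(a * b + c) * e| <= (M + 1) * (b ^+ 2 + c ^+ 2 + e ^+ 2).
Proof.
move=> aM; have M0 := le_trans (normr_ge0 a) aM.
have ineq : `|a * b + c| <= M * `|b| + `|c|.
  apply: le_trans (ler_normD _ _) _; rewrite normrM lerD2r.
  by apply: ler_wpM2r.
rewrite normrM; apply: le_trans (ler_wpM2r (normr_ge0 e) ineq) _.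
rewrite -(real_normK (num_real b)) -(real_normK (num_real c)) -(real_normK (num_real e)).
have := normr_ge0 b; have := normr_ge0 c; have := normr_ge0 e.
set x := `|b|; set y := `|c|; set z := `|e| => z0 y0 x0.
have := mulr_ge0 M0 (sqr_ge0 (x - z)); have := sqr_ge0 (y - z).
nra.
Qed.

Section product_integrals.
Context {R : realType} {d : measure_display} {V : measurableType d}.
Variable pi : {sigma_finite_measure set V -> \bar R}.

Lemma measurable_Uset (T : R) : measurable (Uset T : set (R * V)).
Proof. exact: measurableX. Qed.

Lemma L2_integrable_sqr T g :
  L2 pi T g -> (mu pi).-integrable (Uset T) (fun z => (g z ^+ 2)%:E).
Proof.
move=> [mg ig]; apply/integrableP; split.
  by apply/measurable_EFinP; exact: measurable_funX.
by under eq_integral do rewrite gee0_abs ?lee_fin ?sqr_ge0 //.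
Qed.

Lemma measurable_fun_fst_continuous T (v : R -> R) :
  {within `[0, T], continuous v} ->
  measurable_fun (Uset T : set (R * V)) (fun z => v z.1).
Proof.
move=> cv.
apply: (@measurable_comp _ _ _ _ _ _ `[0, T]%classic v _ fst) => //.
- by move=> _ [z [z1 _] <-].
- exact: subspace_continuous_measurable_fun.
- exact: measurable_funS measurable_fst.
Qed.

Lemma integrable_affine_mul T (G g e : R * V -> R) (v : R -> R) :
  L2 pi T G -> L2 pi T g -> L2 pi T e -> {within `[0, T], continuous v} ->
  (mu pi).-integrable (Uset T) (EFin \o (fun z => (v z.1 * G z + g z) * e z)).
Proof.
move=> LG Lg Le cv; have [mG _] := LG; have [mg _] := Lg; have [me _] := Le.
have [M M0 vM] := continuous_segment_bounded cv.
pose dom z := ((M + 1) * (G z ^+ 2 + g z ^+ 2 + e z ^+ 2))%:E.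
have idom : (mu pi).-integrable (Uset T) dom.
  have -> : dom =
      (fun z => (M + 1)%:E * ((G z ^+ 2)%:E + (g z ^+ 2)%:E + (e z ^+ 2)%:E))%E.
    by apply/funext => z; rewrite /dom EFinM !EFinD.
  apply: integrableZl; first exact: measurable_Uset.
  apply: integrableD; [exact: measurable_Uset| |exact: L2_integrable_sqr].
  by apply: integrableD; [exact: measurable_Uset|exact: L2_integrable_sqr..].
apply: (@le_integrable _ _ _ (mu pi) (Uset T) (measurable_Uset T) _ dom) => //.
- apply/measurable_EFinP; apply: measurable_funM => //.
  apply: measurable_funD => //; apply: measurable_funM => //.
  exact: measurable_fun_fst_continuous.
- move=> z [z1 _]; rewrite /= lee_fin.
  apply: le_trans (normr_affine_mul_le _ _ _ _) (ler_norm _).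
  by apply: vM; move: z1; rewrite /= in_itv.
Qed.

Lemma integrable_restrict_Uset T (h : R * V -> R) :
  (mu pi).-integrable (Uset T) (EFin \o h) ->
  (mu pi).-integrable setT ((EFin \o h) \_ (Uset T)).
Proof.
by move=> ih; apply/integrable_restrict => //; [exact: measurable_Uset|rewrite setTI].
Qed.

(* [x |-> int_V h(x, v) pi(dv)] for [x] in [[0, T]]; [fine] sends the
   infinite values, taken on a null set of [x], to [0]. *)
Definition section_integral T (h : R * V -> R) : R -> R :=
  fine \o fubini_F pi ((EFin \o h) \_ (Uset T)).

Lemma measurable_section_integral T (h : R * V -> R) :
  (mu pi).-integrable (Uset T) (EFin \o h) ->
  measurable_fun setT (EFin \o section_integral T h).
Proof.
move=> /integrable_restrict_Uset/measurable_fubini_F mF.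
by apply/measurable_EFinP; apply: measurableT_comp => //; exact: fine_measurable.
Qed.

Lemma integrable_section_integral T (h : R * V -> R) :
  (mu pi).-integrable (Uset T) (EFin \o h) ->
  lebesgue_measure.-integrable `[0, T] (EFin \o section_integral T h).
Proof.
move=> ih; have iF := integrable_fubini_F (integrable_restrict_Uset ih).
apply: (@le_integrable _ _ _ lebesgue_measure `[0, T]%classic _ _
  (fubini_F pi ((EFin \o h) \_ (Uset T)))) => //.
- exact: measurable_funS (measurable_section_integral ih).
- move=> x _; rewrite /section_integral /=; set y := fubini_F _ _ _.
  by case: y => [r||] /=; rewrite ?leey.
- exact: integrableS iF.
Qed.

Lemma Rintegral_prefix_parameterized T (h : R * V -> R) t :
  (mu pi).-integrable (Uset T) (EFin \o h) -> 0 <= t <= T ->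
  Rintegral (mu pi) (`[0, t] `*` setT) h =
  parameterized_integral lebesgue_measure 0 t (section_integral T h).
Proof.
move=> ih /andP[t0 tT]; set H := (EFin \o h) \_ (Uset T).
have iH : (mu pi).-integrable setT H := integrable_restrict_Uset ih.
have tVU : `[0, t]%classic `*` [set: V] `<=` Uset T.
  move=> [x y] [/= xt _]; split => //=; move: xt; rewrite /= !in_itv /=.
  by move=> /andP[-> xt]; rewrite (le_trans xt tT).
rewrite /parameterized_integral /Rintegral; congr fine.
transitivity (\int[mu pi]_(z in `[0%R, t] `*` setT) H z)%E.
  by apply: eq_integral => z; rewrite in_setE => /tVU zU; rewrite /H patchT // in_setE.
have iHt : (mu pi).-integrable setT (H \_ (`[0, t] `*` setT)).
  apply/integrable_restrict => //; first exact: measurableX.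
  by rewrite setTI; apply: integrableS iH => //; exact: measurableX.
rewrite [LHS]integral_mkcond -(integral12_prod_meas1 iHt).
transitivity (\int[lebesgue_measure]_x (fubini_F pi H \_ `[0%R, t]) x)%E.
  apply: eq_integral => x _; rewrite /fubini_F /patch; case: ifPn => xt.
    by apply: eq_integral => y _; rewrite ifT // in_setE; split => //; rewrite -in_setE.
  apply: integral0_eq => y _; rewrite ifF //.
  by apply/negbTE; apply: contra xt; rewrite !in_setE => -[].
rewrite -integral_mkcond; apply: ae_eq_integral => //.
- exact: measurable_funS (measurable_fubini_F iH).
- exact: measurable_funS (measurable_section_integral ih).
- apply: filterS (integrable_ae measurableT (integrable_fubini_F iH)).
  by move=> x /(_ I) xfin _; rewrite /= fineK.
Qed.

Lemma continuous_Rintegral_prefix T (h : R * V -> R) :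
  (mu pi).-integrable (Uset T) (EFin \o h) ->
  {within `[0, T], continuous (fun t => Rintegral (mu pi) (`[0, t] `*` setT) h)}.
Proof.
move=> ih; have [T0|T0] := leP 0 T; last first.
  by rewrite set_itv_ge; [exact: continuous_subspace0|rewrite bnd_simp -ltNge].
have := parameterized_integral_continuous T0 (integrable_section_integral ih).
apply: subspace_eq_continuous => t; rewrite in_setE /= in_itv /= => t0T.
by rewrite /from_subspace (Rintegral_prefix_parameterized ih).
Qed.

End product_integrals.

Section chaos_expansion.
Context {R : realType} {d : measure_display} {V : measurableType d}.
Variables (pi : {sigma_finite_measure set V -> \bar R}) (m : nat -> R * V -> R).
Variables (G : R * V -> R) (f : multi_index -> R * V -> R) (w : multi_index -> R).

Lemma diamond_int_mi_zero (h : multi_index -> R * V -> R) t :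
  diamond_int pi m h t mi_zero = 0.
Proof. by rewrite /diamond_int fsbig1. Qed.

Lemma diamond_int_lin_field_congr (u v : multi_index -> R -> R) t b :
  (forall k, (0 < b k)%N -> forall s, 0 <= s <= t ->
     u (mi_sub b (eps k)) s = v (mi_sub b (eps k)) s) ->
  diamond_int pi m (lin_field u G f) t b = diamond_int pi m (lin_field v G f) t b.
Proof.
move=> uv; apply: eq_fsbigr => k; rewrite in_setE /= => bk.
apply: eq_Rintegral => z; rewrite in_setE => -[/= z1 _].
by rewrite /lin_field uv //; move: z1; rewrite in_itv.
Qed.

Definition picard (v : multi_index -> R -> R) : multi_index -> R -> R :=
  fun a t => w a + diamond_int pi m (lin_field v G f) t a.

Definition picard_iter (n : nat) : multi_index -> R -> R :=
  iter n picard (fun a _ => w a).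

Lemma picard_iterS n : picard_iter n.+1 = picard (picard_iter n).
Proof. by []. Qed.

Lemma picard_iter_succ n b : fin_supp b -> (mi_norm b < n)%N ->
  picard_iter n.+1 b = picard_iter n b.
Proof.
elim: n b => [//|n IH] b fb bn; apply/funext => t.
change (picard (picard_iter n.+1) b t = picard (picard_iter n) b t).
rewrite /picard; congr (_ + _).
apply: diamond_int_lin_field_congr => k bk s _.
by rewrite IH //; [exact: fin_supp_mi_sub|rewrite -ltnS -(mi_norm_sub_eps fb bk)].
Qed.

Lemma picard_iter_stable n b : fin_supp b -> (mi_norm b < n)%N ->
  picard_iter n b = picard_iter (mi_norm b).+1 b.
Proof.
elim: n => [//|n IH] fb; rewrite ltnS leq_eqVlt => /orP[/eqP <- //|bn].
by rewrite picard_iter_succ // IH.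
Qed.

Definition chaos_solution : multi_index -> R -> R :=
  fun a => picard_iter (mi_norm a).+1 a.

Lemma chaos_solution_is_solution T : is_solution pi T m w G f chaos_solution.
Proof.
move=> t _ a fa; rewrite /chaos_solution picard_iterS /picard; congr (_ + _).
apply: diamond_int_lin_field_congr => k ak s _.
rewrite (@picard_iter_stable (mi_norm a)) //; first exact: fin_supp_mi_sub.
by rewrite (mi_norm_sub_eps fa ak).
Qed.

Lemma is_solution_unique T (u v : multi_index -> R -> R) :
  is_solution pi T m w G f u -> is_solution pi T m w G f v ->
  forall a, fin_supp a -> forall t, 0 <= t <= T -> u a t = v a t.
Proof.
move=> su sv a.
elim: (mi_norm a).+1 {-2}a (ltnSn (mi_norm a)) => // n IH {}a an fa t tT.
rewrite (su t tT a fa) (sv t tT a fa); congr (_ + _).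
apply: diamond_int_lin_field_congr => k ak s /andP[s0 st]; apply: IH.
- by rewrite -ltnS -(mi_norm_sub_eps fa ak).
- exact: fin_supp_mi_sub.
- by rewrite s0 (le_trans st) //; case/andP: tT.
Qed.

Variable T : R.
Hypotheses (Lm : forall k, L2 pi T (m k)) (LG : L2 pi T G).
Hypothesis Lf : forall a, fin_supp a -> L2 pi T (f a).

Lemma continuous_coeffs_picard v :
  continuous_coeffs T v -> continuous_coeffs T (picard v).
Proof.
move=> cv a fa x; apply: continuousD; first exact: cst_continuous.
apply: continuous_fsum => [|k _].
  by apply: sub_finite_set fa => k /=; rewrite lt0n.
apply: continuous_Rintegral_prefix; apply: integrable_affine_mul => //.
- exact/Lf/fin_supp_mi_sub.
- exact/cv/fin_supp_mi_sub.
Qed.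

Lemma continuous_coeffs_chaos_solution : continuous_coeffs T chaos_solution.
Proof.
have cont_iter n : continuous_coeffs T (picard_iter n).
  elim: n => [a _|n IH]; first exact: cst_continuous.
  by rewrite picard_iterS; exact: continuous_coeffs_picard.
by move=> a; exact: cont_iter.
Qed.

End chaos_expansion.

Theorem lemma2 (R : realType) (d : measure_display) (V : measurableType d)
    (pi : {sigma_finite_measure set V -> \bar R}) (T : R)
    (m : nat -> R * V -> R)
    (G : R * V -> R) (w : multi_index -> R) (f : multi_index -> R * V -> R) :
  complete_orthonormal pi T m ->
  L2 pi T G ->
  (forall a, fin_supp a -> L2 pi T (f a)) ->
  exists u : multi_index -> R -> R,
    [/\ continuous_coeffs T u,
        is_solution pi T m w G f u,
        (forall v : multi_index -> R -> R,
           continuous_coeffs T v -> is_solution pi T m w G f v ->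
           forall a, fin_supp a -> forall t, 0 <= t <= T -> v a t = u a t),
        (forall t, 0 <= t <= T -> u mi_zero t = w mi_zero) &
        (forall a, fin_supp a -> (1 <= mi_norm a)%N ->
           forall t, 0 <= t <= T ->
           u a t = w a + \sum_(k \in [set k | (0 < a k)%N])
             Rintegral (mu pi) (`[0, t] `*` setT)
               (fun z => (u (mi_sub a (eps k)) z.1 * G z
                          + f (mi_sub a (eps k)) z) * m k z))].
Proof.
move=> [Lm _ _] LG Lf.
have sol : is_solution pi T m w G f (chaos_solution pi m G f w).
  exact: chaos_solution_is_solution.
exists (chaos_solution pi m G f w); split.
- exact: continuous_coeffs_chaos_solution.
- exact: sol.
- by move=> v _ sv a fa t tT; exact: (is_solution_unique sv sol).
- by move=> t tT; rewrite (sol t tT mi_zero fin_supp_mi_zero) diamond_int_mi_zero addr0.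
- by move=> a fa _ t tT; rewrite (sol t tT a fa).
Qed.
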